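(* Let $R$ be a commutative ring and let $\mathcal X'(R):=\mathcal X'(\mathrm{Spec}(R))$. Then the map $$\mathscr J:\mathcal X'(R)^{\mathrm{zar}}\to\mathrm{Rd}(R)^{\mathrm{inv}},\qquad C\mapsto\bigcap\{P\in\mathrm{Spec}(R)\mid P\in C\}$$ is a homeomorphism. In particular, $\mathcal X'(R)$ with the Zariski topology is a spectral space. Moreover, the same map $\mathscr J$ is a homeomorphism between $\mathcal X'(R)^{\mathrm{inv}}$ and $\mathrm{Rd}(R)^{\mathrm{hk}}$.
   Context: For a spectral space $X$, $\mathcal X'(X)$ is the set of nonempty closed subsets of $X$, with the Zariski topology having as basis of open sets $\mathcal U'(\Omega):=\{Y\in\mathcal X'(X)\mid Y\cap\Omega=\emptyset\}$, $\Omega$ ranging over quasi-compact open subsets of $X$; $\mathrm{Spec}(R)$ carries the Zariski topology. $\mathrm{Rd}(R)$ is the set of proper radical ideals of $R$; $\mathrm{Rd}(R)^{\mathrm{hk}}$ denotes it with the hull-kernel topology, whose subbasis of closed sets consists of the sets $\{H\in\mathrm{Rd}(R)\mid x_1,\dots,x_n\in H\}$ for $x_1,\dots,x_n\in R$ (with this topology it is spectral). For a spectral space $Y$, $Y^{\mathrm{inv}}$ denotes $Y$ with the inverse topology, having the quasi-compact open subsets of $Y$ as a basis of closed sets. *)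

(* R is a commutative ring (possibly the zero ring). *)
From HB Require Import structures.
From mathcomp Require Import all_boot all_order all_algebra.
From Stdlib Require List.
Set Implicit Arguments. Unset Strict Implicit. Unset Printing Implicit Defensive.
Import GRing.Theory.
Local Open Scope ring_scope.

(* A topology on X is represented by its predicate "is open". *)
Definition topology (X : Type) := (X -> Prop) -> Prop.

Definition generated {X : Type} (B : (X -> Prop) -> Prop) : topology X :=
  fun U => forall x, U x ->
    exists l : list (X -> Prop),
      (forall V, List.In V l -> B V /\ V x) /\
      (forall y, (forall V, List.In V l -> V y) -> U y).

Definition generated_closed {X : Type} (F : (X -> Prop) -> Prop) : topology X :=
  generated (fun U => exists C, F C /\ forall x, U x <-> ~ C x).

Definition is_closed {X : Type} (T : topology X) (C : X -> Prop) : Prop :=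
  T (fun x => ~ C x).

Definition quasi_compact {X : Type} (T : topology X) (K : X -> Prop) : Prop :=
  forall (Cov : (X -> Prop) -> Prop),
    (forall U, Cov U -> T U) ->
    (forall x, K x -> exists U, Cov U /\ U x) ->
    exists l : list (X -> Prop),
      (forall U, List.In U l -> Cov U) /\
      (forall x, K x -> exists U, List.In U l /\ U x).

Definition continuous {X Y : Type} (TX : topology X) (TY : topology Y)
  (f : X -> Y) : Prop :=
  forall V, TY V -> TX (fun x => V (f x)).

Definition homeomorphism {X Y : Type} (TX : topology X) (TY : topology Y)
  (f : X -> Y) : Prop :=
  exists g : Y -> X,
    (forall x, g (f x) = x) /\ (forall y, f (g y) = y) /\
    continuous TX TY f /\ continuous TY TX g.

(* Closure of a point: y is in the closure of {x} iff every open set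
   containing y contains x. *)
Definition in_closure_pt {X : Type} (T : topology X) (x y : X) : Prop :=
  forall U, T U -> U y -> U x.

Definition irreducible {X : Type} (T : topology X) (C : X -> Prop) : Prop :=
  (exists x, C x) /\
  forall C1 C2, is_closed T C1 -> is_closed T C2 ->
    (forall x, C x -> C1 x \/ C2 x) ->
    (forall x, C x -> C1 x) \/ (forall x, C x -> C2 x).

(* Spectral space (Hochster): T0, quasi-compact, sober, and the quasi-compact
   open sets are closed under finite intersections and form a basis. *)
Definition spectral {X : Type} (T : topology X) : Prop :=
  (forall x y, (forall U, T U -> (U x <-> U y)) -> x = y) /\
  quasi_compact T (fun _ => True) /\
  (forall U V, T U -> quasi_compact T U -> T V -> quasi_compact T V ->
     quasi_compact T (fun x => U x /\ V x)) /\
  (forall U x, T U -> U x ->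
     exists V, T V /\ quasi_compact T V /\ V x /\ forall y, V y -> U y) /\
  (forall C, is_closed T C -> irreducible T C ->
     exists x, forall y, C y <-> in_closure_pt T x y).

Definition inverse_top {X : Type} (T : topology X) : topology X :=
  generated_closed (fun K => T K /\ quasi_compact T K).

Section Ring.
Variable R : comPzRingType.

Definition is_ideal (I : R -> Prop) : Prop :=
  I 0 /\ (forall x y, I x -> I y -> I (x + y)) /\
  (forall a x, I x -> I (a * x)).

Definition is_prime_ideal (P : R -> Prop) : Prop :=
  is_ideal P /\ ~ P 1 /\ (forall x y, P (x * y) -> P x \/ P y).

Definition is_proper_radical_ideal (I : R -> Prop) : Prop :=
  is_ideal I /\ ~ I 1 /\ (forall x (n : nat), I (x ^+ n) -> I x).

Definition Spec : Type := {P : R -> Prop | is_prime_ideal P}.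

Definition zariski : topology Spec :=
  generated (fun U => exists f : R, forall P : Spec, U P <-> ~ sval P f).

Definition Xp : Type :=
  {C : Spec -> Prop | is_closed zariski C /\ exists P, C P}.

Definition Xp_zar : topology Xp :=
  generated (fun U => exists Om : Spec -> Prop,
    zariski Om /\ quasi_compact zariski Om /\
    forall Y : Xp, U Y <-> (forall P, sval Y P -> Om P -> False)).

Definition Rd : Type := {I : R -> Prop | is_proper_radical_ideal I}.

Definition Rd_hk : topology Rd :=
  generated_closed (fun C => exists xs : list R,
    forall H : Rd, C H <-> (forall x, List.In x xs -> sval H x)).

Definition Jmap (C : Xp) : R -> Prop :=
  fun x => forall P : Spec, sval C P -> sval P x.

End Ring.

Arguments zariski R : clear implicits.
Arguments Xp_zar R : clear implicits.
Arguments Rd_hk R : clear implicits.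
Arguments Jmap R C x : clear implicits.

(* C |-> J(C) and I |-> V(I) are mutually inverse between nonempty closed subsets of
   Spec R and proper radical ideals, since a radical ideal is the intersection of the
   primes containing it (Krull's lemma).  The quasi-compact opens of Spec R are exactly
   the sets D(f_1,...,f_n), and Y misses D(f_1,...,f_n) iff all f_i lie in J(Y); so the
   subbasic opens U'(D(f_1,...,f_n)) of X'(R) correspond to the sets {I | f_i \in I}, the
   complements of the subbasic opens D(f_1,...,f_n) of Rd(R)^hk.  These D-sets are
   quasi-compact in Rd(R)^hk as well (again by Krull's lemma: if no power of f lies in
   the ideal of the g with D(g) inside a member of a cover of D(f), a prime avoids both),
   and a quasi-compact open of a topology given by a subbasis is a finite union of finite
   intersections of subbasic sets.  Hence the subbasic opens of each topology pull back
   to opens of the other, which gives both homeomorphisms.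
   For spectrality, order X'(R) by J(Y) \subseteq J(Z): opens are upward closed, each
   basic open {Y | f_i \in J(Y)} has a least element V(rad(f_1,...,f_n)) and hence is
   quasi-compact, and the generic point of an irreducible closed set C is V of the union
   of the J(Y), Y \in C, which irreducibility makes a directed union. *)

From HB Require Import structures.
From mathcomp Require Import all_boot all_order all_algebra ring.
From mathcomp Require Import boolp.
From mathcomp Require classical_sets.
From Stdlib Require Import Classical.
From Stdlib Require List.
Import GRing.Theory.
Local Open Scope ring_scope.

Lemma predext {X : Type} (U V : X -> Prop) : (forall x, U x <-> V x) -> U = V.
Proof. by move=> UV; apply: funext => x; apply: propext. Qed.

Lemma not_forall_in {A : Type} (l : list A) (P : A -> Prop) :
  ~ (forall a, List.In a l -> P a) <-> exists a, List.In a l /\ ~ P a.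
Proof.
split=> [notall | [a [la nPa]] allP]; last exact: nPa (allP a la).
by apply: NNPP => none; apply: notall => a la; apply: NNPP => nPa; apply: none; exists a.
Qed.

Lemma list_choice {A C : Type} (l : list A) (P : A -> C -> Prop) :
  (forall a, List.In a l -> exists c, P a c) ->
  exists l' : list C,
    (forall c, List.In c l' -> exists a, List.In a l /\ P a c) /\
    (forall a, List.In a l -> exists c, List.In c l' /\ P a c).
Proof.
elim: l => [|a l IH] choiceP; first by exists nil; split=> ? [].
have [c Pac] := choiceP a (or_introl erefl).
have [l' [l'l ll']] := IH (fun b lb => choiceP b (or_intror lb)).
exists (c :: l'); split=> [c' [<-|l'c'] | a' [<-|la']].
- by exists a; split; [left|].
- by have [b [lb Pbc']] := l'l c' l'c'; exists b; split; [right|].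
- by exists c; split; [left|].
- by have [c' [l'c' Pac']] := ll' a' la'; exists c'; split; [right|].
Qed.

(** * Topologies given by a subbasis *)

Definition finite_subcover {X : Type} (Cov : (X -> Prop) -> Prop) (K : X -> Prop) :=
  exists l : list (X -> Prop), (forall U, List.In U l -> Cov U) /\
    forall x, K x -> exists U, List.In U l /\ U x.

Section FiniteSubcover.
Context {X : Type} {Cov : (X -> Prop) -> Prop}.

Lemma finite_subcover_empty (K : X -> Prop) : (forall x, ~ K x) -> finite_subcover Cov K.
Proof. by move=> K0; exists nil; split=> [? []|x /K0]. Qed.

Lemma finite_subcover_sub {K K' : X -> Prop} : (forall x, K' x -> K x) ->
  finite_subcover Cov K -> finite_subcover Cov K'.
Proof. by move=> K'K [l [lCov covK]]; exists l; split=> // x /K'K /covK. Qed.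

Lemma finite_subcover_union (K1 K2 : X -> Prop) :
  finite_subcover Cov K1 -> finite_subcover Cov K2 ->
  finite_subcover Cov (fun x => K1 x \/ K2 x).
Proof.
move=> [l1 [l1Cov covK1]] [l2 [l2Cov covK2]]; exists (List.app l1 l2); split.
  by move=> U /(@List.in_app_or _ _ _ _) [/l1Cov|/l2Cov].
move=> x [/covK1|/covK2] [U [lU Ux]]; exists U; split=> //; apply: List.in_or_app; auto.
Qed.

Lemma finite_subcover_bigcup {A : Type} (l : list A) (K : A -> X -> Prop) :
  (forall a, List.In a l -> finite_subcover Cov (K a)) ->
  finite_subcover Cov (fun x => exists a, List.In a l /\ K a x).
Proof.
elim: l => [|a l IH] covK; first by apply: finite_subcover_empty => x [? [[]]].
apply: (@finite_subcover_sub (fun x => K a x \/ exists b, List.In b l /\ K b x)).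
  by move=> x [b [[<-|lb] Kbx]]; [left|right; exists b].
apply: finite_subcover_union; first exact: covK a (or_introl erefl).
by apply: IH => b lb; apply: covK; right.
Qed.

End FiniteSubcover.

Lemma quasi_compact_bigcup {X A : Type} (T : topology X) (l : list A) (K : A -> X -> Prop) :
  (forall a, List.In a l -> quasi_compact T (K a)) ->
  quasi_compact T (fun x => exists a, List.In a l /\ K a x).
Proof.
move=> qcK Cov CovT covK; apply: finite_subcover_bigcup => a la.
by apply: qcK => // x Kx; apply: covK; exists a.
Qed.

Lemma quasi_compact_generic_point {X : Type} (T : topology X) (K : X -> Prop) (x0 : X) :
  K x0 -> (forall U, T U -> U x0 -> forall x, K x -> U x) -> quasi_compact T K.
Proof.
move=> Kx0 x0gen Cov CovT /(_ x0 Kx0) [U [CovU Ux0]].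
exists [:: U]; split=> [V [<-|[]] // | x Kx].
by exists U; split; [left | exact: x0gen (CovT U CovU) Ux0 x Kx].
Qed.

Section Generated.
Context {X : Type} {B : (X -> Prop) -> Prop}.
Local Notation T := (generated B).

Lemma generated_subbasis V : B V -> T V.
Proof. by move=> BV x Vx; exists [:: V]; split=> [W [<-|[]] | y] //; apply; left. Qed.

Lemma generated_local U :
  (forall x, U x -> exists W, T W /\ W x /\ forall y, W y -> U y) -> T U.
Proof.
move=> locU x /locU [W [TW [Wx WU]]].
by have [l [lB lW]] := TW x Wx; exists l; split=> // y /lW /WU.
Qed.

Lemma generated_setT : T (fun _ => True).
Proof. by move=> x _; exists nil; split=> [? []|]. Qed.

Lemma generated_setI U V : T U -> T V -> T (fun x => U x /\ V x).
Proof.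
move=> TU TV x [Ux Vx].
have [l1 [l1B l1U]] := TU x Ux; have [l2 [l2B l2V]] := TV x Vx.
exists (List.app l1 l2); split=> [W /(@List.in_app_or _ _ _ _) [/l1B|/l2B] // | y l12y].
by split; [apply: l1U | apply: l2V] => W lW; apply: l12y; apply: List.in_or_app; auto.
Qed.

Lemma generated_bigcap {A : Type} (l : list A) (O : A -> X -> Prop) :
  (forall a, List.In a l -> T (O a)) -> T (fun x => forall a, List.In a l -> O a x).
Proof.
elim: l => [|a l IH] TO.
  rewrite [P in T P](_ : _ = fun _ => True); first exact: generated_setT.
  by apply: predext => x; split=> // _ ? [].
rewrite [P in T P](_ : _ = fun x => O a x /\ forall b, List.In b l -> O b x).
  by apply: generated_setI; [apply: TO; left | apply: IH => b lb; apply: TO; right].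
apply: predext => x; split=> [Ox | [Oax Ox] b [<-|lb] //]; last exact: Ox.
by split=> [|b lb]; apply: Ox; [left|right].
Qed.

Lemma generated_bigcup {A : Type} (P : A -> Prop) (O : A -> X -> Prop) :
  (forall a, P a -> T (O a)) -> T (fun x => exists a, P a /\ O a x).
Proof.
move=> TO; apply: generated_local => x [a [Pa Oax]].
by exists (O a); split; [exact: TO | split=> // y Oay; exists a].
Qed.

Lemma generated_cnf {A : Type} (ls : list (list A)) (O : A -> X -> Prop) :
  (forall l a, List.In l ls -> List.In a l -> T (O a)) ->
  T (fun x => forall l, List.In l ls -> exists a, List.In a l /\ O a x).
Proof.
move=> TO; apply: generated_bigcap => l lsl.
by apply: generated_bigcup => a la; exact: TO lsl la.
Qed.

Lemma quasi_compact_open_decomp {K : X -> Prop} : T K -> quasi_compact T K ->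
  exists ls : list (list (X -> Prop)),
    (forall l V, List.In l ls -> List.In V l -> B V) /\
    forall x, K x <-> exists l, List.In l ls /\ forall V, List.In V l -> V x.
Proof.
move=> TK qcK.
pose meet (l : list (X -> Prop)) x := forall V, List.In V l -> V x.
pose Cov W := exists l, (forall V, List.In V l -> B V) /\ W = meet l /\ forall x, W x -> K x.
have [Ws [WsCov covK]] : finite_subcover Cov K.
  apply: qcK => [W [l [lB [-> _]]] | x Kx].
    by apply: generated_bigcap => V lV; apply: generated_subbasis; exact: lB.
  have [l [lBx lK]] := TK x Kx.
  exists (meet l); split=> [|V /lBx [] //]; exists l.
  by split=> [V /lBx [] | ].
have [ls [lsWs Wsls]] := list_choice Ws (fun W l =>
  (forall V, List.In V l -> B V) /\ W = meet l /\ forall x, W x -> K x) WsCov.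
exists ls; split=> [l V lsl | x]; first by have [W [_ [lB _]]] := lsWs l lsl; exact: lB.
split.
  move=> /covK [W [WsW Wx]]; have [l [lsl [_ [Wl _]]]] := Wsls W WsW.
  by exists l; split=> //; move: Wx; rewrite Wl.
by move=> [l [/lsWs [W [_ [_ [-> WK]]]] lx]]; exact: WK.
Qed.

End Generated.

Lemma continuous_generated {X Y : Type} (BX : (X -> Prop) -> Prop) (BY : (Y -> Prop) -> Prop)
  (f : X -> Y) :
  (forall V, BY V -> generated BX (fun x => V (f x))) ->
  continuous (generated BX) (generated BY) f.
Proof.
move=> BYopen V TV; apply: generated_local => x /TV [l [lB lV]].
exists (fun x => forall W, List.In W l -> W (f x)); split.
  by apply: (generated_bigcap l (fun W x => W (f x))) => W /lB [/BYopen].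
by split=> [W /lB [] | y /lV].
Qed.

Lemma inverse_top_compl {X : Type} (T : topology X) (K : X -> Prop) :
  T K -> quasi_compact T K -> inverse_top T (fun x => ~ K x).
Proof. by move=> TK qcK; apply: generated_subbasis; exists K. Qed.

Lemma continuous_to_inverse {X Y : Type} (BX : (X -> Prop) -> Prop)
  (BY : (Y -> Prop) -> Prop) (f : X -> Y) :
  (forall V, BY V -> generated BX (fun x => ~ V (f x))) ->
  continuous (generated BX) (inverse_top (generated BY)) f.
Proof.
move=> BYclosed; apply: continuous_generated => U [K [[TK qcK] UK]].
have [ls [lsB Kls]] := quasi_compact_open_decomp TK qcK.
rewrite [P in generated BX P](_ : _ = fun x => forall l, List.In l ls ->
  exists V, List.In V l /\ ~ V (f x)).
  by apply: generated_cnf => l V lsl lV; apply: BYclosed; exact: lsB lsl lV.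
apply: predext => x; rewrite UK Kls; split=> [notK l lsl | cnf [l [lsl lfx]]].
  by apply/not_forall_in => lfx; apply: notK; exists l.
by have [V [lV nVfx]] := cnf l lsl; exact: nVfx (lfx V lV).
Qed.

(** * Ideals and Krull's lemma *)

Lemma Zorn_chain_union {T : Type} (P : (T -> Prop) -> Prop) (A0 : T -> Prop) : P A0 ->
  (forall F : (T -> Prop) -> Prop, (exists A, F A) -> (forall A, F A -> P A) ->
    (forall A B, F A -> F B -> (forall x, A x -> B x) \/ (forall x, B x -> A x)) ->
    P (fun x => exists A, F A /\ A x)) ->
  exists M, P M /\ forall N, P N -> (forall x, M x -> N x) -> forall x, N x -> M x.
Proof.
move=> PA0 chainP.
pose le (A B : {A | P A}) := `[< forall x, sval A x -> sval B x >].
have [[M PM] Mmax] : exists M, classical_sets.premaximal le M.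
  apply: (@classical_sets.ZL_preorder _ (exist P A0 PA0)).
- by move=> A; apply/asboolP.
- by move=> A B C /asboolP AB /asboolP BC; apply/asboolP => x /AB /BC.
- move=> F Ftot; have [[[S PS] FS] | F0] := pselect (exists S, F S); last first.
    by exists (exist P A0 PA0) => S FS; case: F0; exists S.
  pose U x := exists A, (exists PA : P A, F (exist P A PA)) /\ A x.
  have PU : P U.
    apply: chainP => [|A [PA _] // | A B [PA FA] [PB FB]]; first by exists S, PS.
    by have [/asboolP|/asboolP] := Ftot _ _ FA FB; [left|right].
  exists (exist P U PU) => -[B PB] FB; apply/asboolP => x Bx.
  by exists B; split; first exists PB.
exists M; split=> // N PN MN x Nx.
by have /asboolP := Mmax (exist P N PN) (asboolT MN); apply.
Qed.

Section Ideals.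
Context {R : comPzRingType}.
Implicit Types (I J P S : R -> Prop) (a x y : R).

Lemma is_ideal0 {I} : is_ideal I -> I 0.
Proof. by case. Qed.

Lemma is_idealD {I x y} : is_ideal I -> I x -> I y -> I (x + y).
Proof. by move=> [_ [Iadd _]]; apply: Iadd. Qed.

Lemma is_idealMl {I} a {x} : is_ideal I -> I x -> I (a * x).
Proof. by move=> [_ [_ Imul]]; apply: Imul. Qed.

Lemma is_idealMr {I} a {x} : is_ideal I -> I x -> I (x * a).
Proof. by rewrite mulrC; apply: is_idealMl. Qed.

Lemma prime_ideal_radical {P} : is_prime_ideal P -> is_proper_radical_ideal P.
Proof.
move=> [Pideal [P1 Pprime]]; split; [|split] => // x; elim=> [|n IH]; first by rewrite expr0.
by rewrite exprS => /Pprime [].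
Qed.

Lemma radical_ideal_notin_pow {I x} n : is_proper_radical_ideal I -> ~ I x -> ~ I (x ^+ n).
Proof. by move=> [_ [_ Irad]] Ix /Irad. Qed.

Lemma bigcap_radical {A : Type} (F : A -> Prop) (Is : A -> R -> Prop) :
  (exists i, F i) -> (forall i, F i -> is_proper_radical_ideal (Is i)) ->
  is_proper_radical_ideal (fun x => forall i, F i -> Is i x).
Proof.
move=> [i0 Fi0] Frad; have Fideal i Fi := proj1 (Frad i Fi).
split; [split; [|split] | split].
- by move=> i Fi; exact: is_ideal0 (Fideal i Fi).
- by move=> x y Fx Fy i Fi; exact: is_idealD (Fideal i Fi) (Fx i Fi) (Fy i Fi).
- by move=> a x Fx i Fi; have := is_idealMl a (Fideal i Fi) (Fx i Fi).
- by move=> /(_ i0 Fi0); exact: proj1 (proj2 (Frad i0 Fi0)).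
- by move=> x n Fxn i Fi; exact: proj2 (proj2 (Frad i Fi)) x n (Fxn i Fi).
Qed.

Definition lincomb (l : list (R * R)) : R :=
  List.fold_right (fun p acc => p.1 * p.2 + acc) 0 l.

Definition ideal_span S y : Prop :=
  exists l : list (R * R), (forall p, List.In p l -> S p.2) /\ y = lincomb l.

Lemma ideal_span_ideal S : is_ideal (ideal_span S).
Proof.
split; [|split]; first by exists nil.
  move=> _ _ [l1 [l1S ->]] [l2 [l2S ->]]; exists (List.app l1 l2); split.
    by move=> p /(@List.in_app_or _ _ _ _) [/l1S|/l2S].
  by elim: l1 {l1S} => [|p l1 IH] /=; rewrite ?add0r // -IH addrA.
move=> a _ [l [lS ->]]; exists (List.map (fun p => (a * p.1, p.2)) l); split.
  by move=> p /List.in_map_iff [q [<- /lS]].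
by elim: l {lS} => [|p l IH] /=; rewrite ?mulr0 // mulrDr -IH mulrA.
Qed.

Lemma ideal_span_sub S y : S y -> ideal_span S y.
Proof. by move=> Sy; exists [:: (1, y)]; split=> [p [<-|[]] | /=]; rewrite ?mul1r ?addr0. Qed.

Lemma ideal_adjoin {I} c : is_ideal I ->
  is_ideal (fun y => exists p r, I p /\ y = p + r * c).
Proof.
move=> Iideal; split; [|split].
- by exists 0, 0; rewrite mul0r addr0; split; first exact: is_ideal0 Iideal.
- move=> _ _ [p1 [r1 [Ip1 ->]]] [p2 [r2 [Ip2 ->]]]; exists (p1 + p2), (r1 + r2).
  by split; [exact: is_idealD | ring].
- move=> a _ [p [r [Ip ->]]]; exists (a * p), (a * r).
  by split; [exact: is_idealMl | ring].
Qed.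

Section AvoidingPowers.
Context {x : R} {P : R -> Prop}.
Hypotheses (Pideal : is_ideal P) (Pavoids : forall n, ~ P (x ^+ n)).
Hypothesis Pmax : forall J, is_ideal J -> (forall n, ~ J (x ^+ n)) ->
  (forall y, P y -> J y) -> forall y, J y -> P y.

Lemma avoiding_powers_adjoin {c} : ~ P c -> exists m p r, P p /\ x ^+ m = p + r * c.
Proof.
move=> Pc; apply: NNPP => noPow; apply: Pc.
apply: (Pmax _ (ideal_adjoin c Pideal)) => [n [p [r [Pp xn]]] | y Py |].
- by apply: noPow; exists n, p, r.
- by exists y, 0; rewrite mul0r addr0.
- by exists 0, 1; rewrite add0r mul1r; split; first exact: is_ideal0 Pideal.
Qed.

Lemma maximal_avoiding_powers_prime : is_prime_ideal P /\ ~ P x.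
Proof.
split; last by move/(_ 1%N): Pavoids; rewrite expr1.
split; [|split] => //; first by move/(_ 0%N): Pavoids; rewrite expr0.
move=> a b Pab; apply: NNPP => /not_or_and [Pa Pb].
have [m [p1 [r1 [Pp1 xm]]]] := avoiding_powers_adjoin Pa.
have [n [p2 [r2 [Pp2 xn]]]] := avoiding_powers_adjoin Pb.
apply: (Pavoids (m + n)); rewrite exprD xm xn.
have -> : (p1 + r1 * a) * (p2 + r2 * b) =
  p1 * (p2 + r2 * b) + (r1 * a * p2 + (r1 * r2) * (a * b)) by ring.
apply: is_idealD Pideal (is_idealMr _ Pideal Pp1) _.
exact: is_idealD Pideal (is_idealMl _ Pideal Pp2) (is_idealMl _ Pideal Pab).
Qed.

End AvoidingPowers.

Lemma prime_avoiding_powers {I} x : is_ideal I -> (forall n, ~ I (x ^+ n)) ->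
  exists P, is_prime_ideal P /\ (forall y, I y -> P y) /\ ~ P x.
Proof.
move=> Iideal Iavoids.
pose Fam J := (is_ideal J /\ forall n, ~ J (x ^+ n)) /\ forall y, I y -> J y.
have [P [[[Pideal Pavoids] IP] Pmax]] : exists P, Fam P /\
    forall J, Fam J -> (forall y, P y -> J y) -> forall y, J y -> P y.
  apply: (Zorn_chain_union Fam I) => // F [A FA] FFam Ftot.
  have FJ := fun J (FJ : F J) => proj1 (proj1 (FFam J FJ)).
  split; [split; [split; [|split]|] |].
  - by exists A; split=> //; exact: is_ideal0 (FJ A FA).
  - move=> y z [B [FB By]] [C [FC Cz]].
    have [BC|CB] := Ftot B C FB FC; [exists C | exists B]; split=> //.
    + by apply: is_idealD (FJ C FC) _ Cz; exact: BC.
    + by apply: is_idealD (FJ B FB) By _; exact: CB.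
  - by move=> a y [B [FB By]]; exists B; split=> //; exact: is_idealMl _ (FJ B FB) By.
  - by move=> n [B [FB Bxn]]; exact: (proj2 (proj1 (FFam B FB)) n Bxn).
  - by move=> y Iy; exists A; split=> //; exact: (proj2 (FFam A FA)).
have [Pprime nPx] : is_prime_ideal P /\ ~ P x.
  apply: (maximal_avoiding_powers_prime Pideal Pavoids) => J Jideal Javoids PJ.
  by apply: Pmax => //; split=> [|y /IP /PJ] //; split.
by exists P.
Qed.

End Ideals.

(** * The sets V(f_1,...,f_n) and D(f_1,...,f_n) *)

(* [pt x] is the ideal attached to the point [x] (a prime of Spec R, an element of Rd(R), or
   J(Y) for Y in X'(R)); [Dnbhd pt U x] says that U contains a basic open D(g) around x. *)
Definition Vset {X A : Type} (pt : X -> A -> Prop) (fs : list A) (x : X) : Prop :=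
  forall f, List.In f fs -> pt x f.

Definition Dset {X A : Type} (pt : X -> A -> Prop) (fs : list A) (x : X) : Prop :=
  exists f, List.In f fs /\ ~ pt x f.

Definition Dnbhd {X A : Type} (pt : X -> A -> Prop) (U : X -> Prop) (x : X) : Prop :=
  exists g, ~ pt x g /\ forall y, ~ pt y g -> U y.

Lemma Dset_not_Vset {X A : Type} (pt : X -> A -> Prop) fs x :
  Dset pt fs x <-> ~ Vset pt fs x.
Proof. by rewrite /Dset /Vset not_forall_in. Qed.

Lemma Vset_concat {X A : Type} (pt : X -> A -> Prop) (ls : list (list A)) x :
  Vset pt (List.concat ls) x <-> forall fs, List.In fs ls -> Vset pt fs x.
Proof.
split=> [Vx fs lsfs f fsf | Vx f /List.in_concat [fs [lsfs fsf]]]; last exact: Vx lsfs f fsf.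
by apply: Vx; apply/List.in_concat; exists fs.
Qed.

Lemma Vset1 {X A : Type} (pt : X -> A -> Prop) f x : Vset pt [:: f] x <-> pt x f.
Proof. by split=> [/(_ f (or_introl erefl)) | ptf g [<-|[]]]. Qed.

Lemma Vset_cat {X A : Type} (pt : X -> A -> Prop) fs gs x :
  Vset pt (List.app fs gs) x <-> Vset pt fs x /\ Vset pt gs x.
Proof.
split=> [Vx | [Vfs Vgs] f /(@List.in_app_or _ _ _ _) [/Vfs|/Vgs] //].
by split=> f fsf; apply: Vx; apply: List.in_or_app; auto.
Qed.

Section BasicNeighbourhoods.
Variables (R : comPzRingType) (X : Type) (pt : X -> R -> Prop).
Hypothesis pt_ideal : forall y, is_ideal (pt y).

Lemma Dnbhd_bigcap_at_prime {x} {l : list (X -> Prop)} : is_prime_ideal (pt x) ->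
  (forall V, List.In V l -> Dnbhd pt V x) ->
  Dnbhd pt (fun y => forall V, List.In V l -> V y) x.
Proof.
move=> [_ [x1 xprime]]; elim: l => [|V l IH] Vnbhd; first by exists 1; split=> // y _ V [].
have [g1 [xg1 g1V]] := Vnbhd V (or_introl erefl).
have [g2 [xg2 g2l]] := IH (fun W lW => Vnbhd W (or_intror lW)).
exists (g1 * g2); split=> [/xprime [] // | y yg W [<-|lW]].
- by apply: g1V => yg1; apply: yg; exact: is_idealMr _ (pt_ideal y) yg1.
- by apply: g2l lW => yg2; apply: yg; exact: is_idealMl _ (pt_ideal y) yg2.
Qed.

Lemma generated_Dnbhd_at_prime (B : (X -> Prop) -> Prop) U x :
  is_prime_ideal (pt x) -> (forall V, B V -> V x -> Dnbhd pt V x) ->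
  generated B U -> U x -> Dnbhd pt U x.
Proof.
move=> xprime BDnbhd TU Ux; have [l [lB lU]] := TU x Ux.
have [g [xg gl]] := Dnbhd_bigcap_at_prime xprime
  (fun V lV => BDnbhd V (proj1 (lB V lV)) (proj2 (lB V lV))).
by exists g; split=> // y /gl /lU.
Qed.

End BasicNeighbourhoods.

Section DsetCompact.
Variables (R : comPzRingType) (X : Type) (T : topology X) (pt : X -> R -> Prop).
Hypothesis pt_radical : forall x, is_proper_radical_ideal (pt x).
Hypothesis pt_onto_primes : forall P, is_prime_ideal P -> exists x, pt x = P.
Hypothesis open_Dnbhd_at_primes : forall U x, T U -> U x -> is_prime_ideal (pt x) -> Dnbhd pt U x.

Section Cover.
Context {Cov : (X -> Prop) -> Prop}.
Hypothesis CovT : forall U, Cov U -> T U.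

Let subordinate g := exists U, Cov U /\ forall y, ~ pt y g -> U y.

Lemma finite_subcover_lincomb {l} : (forall p, List.In p l -> subordinate p.2) ->
  finite_subcover Cov (fun y => ~ pt y (lincomb l)).
Proof.
elim: l => [|p l IH] lsub.
  by apply: finite_subcover_empty => y; apply; exact: is_ideal0 (proj1 (pt_radical y)).
have [U [CovU pU]] := lsub p (or_introl erefl).
apply: (@finite_subcover_sub _ _ (fun y => ~ pt y p.2 \/ ~ pt y (lincomb l))).
  move=> y ypl; apply: NNPP => /not_or_and [/NNPP yp /NNPP yl]; apply: ypl.
  by have Iy := proj1 (pt_radical y); apply: is_idealD Iy (is_idealMl _ Iy yp) yl.
apply: finite_subcover_union; last by apply: IH => q lq; apply: lsub; right.
by exists [:: U]; split=> [V [<-|[]] // | y /pU Uy]; exists U; split; first left.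
Qed.

Lemma finite_subcover_D f : (forall y, ~ pt y f -> exists U, Cov U /\ U y) ->
  finite_subcover Cov (fun y => ~ pt y f).
Proof.
move=> covf.
have [n [l [lsub fn]]] : exists n, ideal_span subordinate (f ^+ n).
  apply: NNPP => nopow.
  have [P [Pprime [spanP Pf]]] := prime_avoiding_powers f (ideal_span_ideal subordinate)
    (fun n fn => nopow (ex_intro _ n fn)).
  have [y ptyP] := pt_onto_primes _ Pprime; subst P.
  have [U [CovU Uy]] := covf y Pf.
  have [g [yg gU]] := open_Dnbhd_at_primes _ _ (CovT _ CovU) Uy Pprime.
  by apply: yg; apply: spanP; apply: ideal_span_sub; exists U.
apply: (finite_subcover_sub _ (finite_subcover_lincomb lsub)) => y yf.
by rewrite -fn; exact: radical_ideal_notin_pow _ (pt_radical y) yf.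
Qed.

End Cover.

Lemma Dset_quasi_compact fs : quasi_compact T (Dset pt fs).
Proof.
move=> Cov CovT covD; apply: finite_subcover_bigcup => f fsf.
by apply: (finite_subcover_D CovT) => y yf; apply: covD; exists f.
Qed.

End DsetCompact.

(** * Closed subsets of Spec R and radical ideals *)

Lemma sig_eq {A : Type} {Q : A -> Prop} (a b : {x : A | Q x}) : sval a = sval b -> a = b.
Proof. by case: a b => [a Qa] [b Qb] /=; exact: eq_exist. Qed.

Section Spectrum.
Context {R : comPzRingType}.

Lemma zariski_Dnbhd {U : Spec R -> Prop} {P : Spec R} : zariski R U -> U P -> Dnbhd sval U P.
Proof.
apply: generated_Dnbhd_at_prime (proj2_sig P) _ => [Q|V [f Vf] VP].
  exact: proj1 (proj2_sig Q).
by exists f; split=> [|Q]; rewrite -Vf.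
Qed.

Lemma zariski_Dset_open fs : zariski R (Dset sval fs).
Proof.
apply: generated_bigcup => f _; apply: generated_subbasis.
by exists f => P.
Qed.

Lemma zariski_Dset_compact fs : quasi_compact (zariski R) (Dset sval fs).
Proof.
apply: Dset_quasi_compact => [P|P Pprime|U P UT UP _].
- exact: prime_ideal_radical (proj2_sig P).
- by exists (exist _ P Pprime).
- exact: zariski_Dnbhd.
Qed.

Lemma zariski_qc_open_Dset {Om : Spec R -> Prop} :
  zariski R Om -> quasi_compact (zariski R) Om -> exists fs, Om = Dset sval fs.
Proof.
move=> TOm qcOm.
pose Cov W := exists g, W = (fun P : Spec R => ~ sval P g) /\ forall P, W P -> Om P.
have [Ws [WsCov covOm]] : finite_subcover Cov Om.
  apply: qcOm => [W [g [-> _]] | P OmP]; first by apply: generated_subbasis; exists g.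
  have [g [Pg gOm]] := zariski_Dnbhd TOm OmP.
  by exists (fun Q : Spec R => ~ sval Q g); split=> //; exists g.
have WsD W : List.In W Ws -> exists g, W = fun P : Spec R => ~ sval P g.
  by move=> /WsCov [g [Wg _]]; exists g.
have [fs [fsWs Wsfs]] := list_choice Ws _ WsD.
exists fs; apply: predext => P; split=> [/covOm [W [WsW WP]] | [f [fsf Pf]]].
  by have [f [fsf Wf]] := Wsfs W WsW; exists f; split=> //; move: WP; rewrite Wf.
have [W [WsW Wf]] := fsWs f fsf; have [g [_ WOm]] := WsCov W WsW.
by apply: WOm; rewrite Wf.
Qed.

Definition zero_locus (I : R -> Prop) (P : Spec R) : Prop := forall x, I x -> sval P x.

Lemma zero_locus_closed I : is_closed (zariski R) (zero_locus I).
Proof.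
apply: generated_local => P notzero.
have [x nIx] := not_all_ex_not _ _ notzero.
have [Ix Px] := imply_to_and _ _ nIx.
exists (fun Q : Spec R => ~ sval Q x); split; first by apply: generated_subbasis; exists x.
by split=> [|Q Qx Qzero] //; exact: Qx (Qzero x Ix).
Qed.

Lemma zero_locus_nonempty (I : Rd R) : exists P, zero_locus (sval I) P.
Proof.
case: I => I [Iideal [I1 _]] /=.
have I1n n : ~ I (1 ^+ n) by rewrite expr1n.
have [P [Pprime [IP _]]] := prime_avoiding_powers 1 Iideal I1n.
by exists (exist _ P Pprime) => x /IP.
Qed.

Lemma closed_zero_locus_Jmap (C : Spec R -> Prop) : is_closed (zariski R) C ->
  C = zero_locus (fun x => forall Q : Spec R, C Q -> sval Q x).
Proof.
move=> Cclosed; apply: predext => P; split=> [CP x /(_ P CP) // | PJ].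
apply: NNPP => nCP; have [g [Pg gnC]] := zariski_Dnbhd Cclosed nCP.
by apply: Pg; apply: PJ => Q CQ; apply: NNPP => Qg; exact: gnC Q Qg CQ.
Qed.

Lemma Jmap_radical (C : Xp R) : is_proper_radical_ideal (Jmap R C).
Proof.
apply: bigcap_radical (proj2 (proj2_sig C)) _ => P _.
exact: prime_ideal_radical (proj2_sig P).
Qed.

Definition Jrd (C : Xp R) : Rd R := exist _ (Jmap R C) (Jmap_radical C).

Definition Vxp (I : Rd R) : Xp R :=
  exist _ (zero_locus (sval I)) (conj (zero_locus_closed (sval I)) (zero_locus_nonempty I)).

Lemma Jmap_Vxp (I : Rd R) : Jmap R (Vxp I) = sval I.
Proof.
case: I => I Irad; apply: predext => x /=; split=> [JVx | Ix P]; last exact.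
apply: NNPP => Ix.
have [P [Pprime [IP Px]]] := prime_avoiding_powers x (proj1 Irad)
  (fun n => radical_ideal_notin_pow n Irad Ix).
by apply: Px; apply: (JVx (exist _ P Pprime)) => y /IP.
Qed.

Lemma Jrd_Vxp (I : Rd R) : Jrd (Vxp I) = I.
Proof. by apply: sig_eq; exact: Jmap_Vxp. Qed.

Lemma Vxp_Jrd (C : Xp R) : Vxp (Jrd C) = C.
Proof. by apply: sig_eq; rewrite /= -closed_zero_locus_Jmap //; case: (proj2_sig C). Qed.

End Spectrum.

(** * The topologies of X'(R) and Rd(R) in terms of V and D *)

Section Topologies.
Context {R : comPzRingType}.

Lemma Rd_hk_eq : Rd_hk R = generated (fun U => exists xs, U = Dset (@sval _ _) xs).
Proof.
congr generated; apply: predext => U; split=> [[C [[xs Cxs] UC]] | [xs ->]].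
  by exists xs; apply: predext => H; rewrite UC Cxs Dset_not_Vset.
exists (Vset (@sval _ _) xs); split; first by exists xs.
by move=> H; rewrite Dset_not_Vset.
Qed.

Lemma Rd_Dset_open xs : Rd_hk R (Dset (@sval _ _) xs).
Proof. by rewrite Rd_hk_eq; apply: generated_subbasis; exists xs. Qed.

Lemma Rd_Dset_compact xs : quasi_compact (Rd_hk R) (Dset (@sval _ _) xs).
Proof.
apply: Dset_quasi_compact => [H|P Pprime|U H UT UH Hprime]; first exact: proj2_sig H.
  by exists (exist _ P (prime_ideal_radical Pprime)).
move: UT; rewrite Rd_hk_eq => UT.
apply: generated_Dnbhd_at_prime Hprime _ UT UH => [K|V [ys ->] [y [ysy Hy]]].
  exact: proj1 (proj2_sig K).
by exists y; split=> // K Ky; exists y.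
Qed.

Lemma Xp_disjoint_Dset (Y : Xp R) fs :
  (forall P, sval Y P -> Dset (@sval _ _) fs P -> False) <-> Vset (Jmap R) fs Y.
Proof.
split=> [disj f fsf P YP | YJ P YP [f [fsf Pf]]]; last exact: Pf (YJ f fsf P YP).
by apply: NNPP => Pf; apply: disj YP _; exists f.
Qed.

Lemma Xp_zar_eq : Xp_zar R = generated (fun U => exists fs, U = Vset (Jmap R) fs).
Proof.
congr generated; apply: predext => U; split=> [[Om [TOm [qcOm UOm]]] | [fs ->]].
  have [fs Omfs] := zariski_qc_open_Dset TOm qcOm.
  by exists fs; apply: predext => Y; rewrite UOm Omfs Xp_disjoint_Dset.
exists (Dset (@sval _ _) fs); split; first exact: zariski_Dset_open.
by split=> [|Y]; [exact: zariski_Dset_compact | rewrite Xp_disjoint_Dset].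
Qed.

End Topologies.

(** * Spectrality of X'(R) *)

Section XpSpectral.
Context {R : comPzRingType}.
Local Notation J := (Jmap R).
Local Notation T := (generated (fun U : Xp R -> Prop => exists fs, U = Vset J fs)).

Lemma Vset_Jmap_open fs : T (Vset J fs).
Proof. by apply: generated_subbasis; exists fs. Qed.

Lemma Xp_open_upward U (Y Z : Xp R) : T U -> U Y -> (forall x, J Y x -> J Z x) -> U Z.
Proof.
move=> TU UY JYZ; have [l [lB lU]] := TU Y UY; apply: lU => V /lB [[fs ->] YV] f fsf.
exact: JYZ (YV f fsf).
Qed.

Lemma Xp_in_closure (Z Y : Xp R) : in_closure_pt T Z Y <-> forall x, J Y x -> J Z x.
Proof.
split=> [ZY x Yx | JYZ U TU UY]; last exact: Xp_open_upward TU UY JYZ.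
have Zx : Vset J [:: x] Z by apply: ZY (Vset_Jmap_open _) _ => f [<-|[]].
by apply: Zx; left.
Qed.

Lemma Jmap_inj (Y Z : Xp R) : J Y = J Z -> Y = Z.
Proof. by move=> JYZ; rewrite -(Vxp_Jrd Y) -(Vxp_Jrd Z); congr Vxp; apply: sig_eq. Qed.

Definition radical_hull (fs : list R) (y : R) : Prop :=
  forall H : Rd R, Vset (@sval _ _) fs H -> sval H y.

Lemma radical_hull_radical {fs} : (exists H : Rd R, Vset (@sval _ _) fs H) ->
  is_proper_radical_ideal (radical_hull fs).
Proof. by move=> nonempty; apply: bigcap_radical nonempty _ => H _; exact: proj2_sig H. Qed.

Lemma Vset_Jmap_compact fs : quasi_compact T (Vset J fs).
Proof.
have [[Y Yfs] | empty] := pselect (exists Y, Vset J fs Y); last first.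
  by move=> Cov _ _; apply: finite_subcover_empty => Y Yfs; apply: empty; exists Y.
pose I0 : Rd R := exist _ (radical_hull fs) (radical_hull_radical (ex_intro _ (Jrd Y) Yfs)).
(* Vxp I0 is the least element of Vset J fs for the order J Y \subseteq J Z. *)
apply: (quasi_compact_generic_point _ _ (Vxp I0)) => [|U TU UI0 Z Zfs].
  by move=> f fsf; rewrite Jmap_Vxp => H; apply.
by apply: Xp_open_upward TU UI0 _; rewrite Jmap_Vxp => x /= /(_ (Jrd Z) Zfs).
Qed.

Lemma meet_Vset_Jmap {l : list (Xp R -> Prop)} :
  (forall V, List.In V l -> exists fs, V = Vset J fs) ->
  exists fs, (fun Y => forall V, List.In V l -> V Y) = Vset J fs.
Proof.
move=> lB; have [ls [lsl lls]] := list_choice l (fun V fs => V = Vset J fs) lB.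
exists (List.concat ls); apply: predext => Y; rewrite Vset_concat.
split=> [lY fs /lsl [V [lV <-]] | lsY V /lls [fs [lsfs ->]]]; [exact: lY | exact: lsY].
Qed.

Lemma Xp_qc_open_decomp {K} : T K -> quasi_compact T K ->
  exists F : list (list R), K = fun Y => exists fs, List.In fs F /\ Vset J fs Y.
Proof.
move=> TK qcK; have [ls [lsB Kls]] := quasi_compact_open_decomp TK qcK.
have [F [Fls lsF]] := list_choice ls
  (fun l fs => (fun Y => forall V, List.In V l -> V Y) = Vset J fs)
  (fun l lsl => meet_Vset_Jmap (fun V => lsB l V lsl)).
exists F; apply: predext => Y; rewrite Kls.
split=> [[l [lsl lY]] | [fs [Ffs fsY]]].
  by have [fs [Ffs lfs]] := lsF l lsl; exists fs; split=> //; rewrite -lfs.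
by have [l [lsl lfs]] := Fls fs Ffs; exists l; split=> //; move: fsY; rewrite -lfs.
Qed.

Lemma Xp_T0 (Y Z : Xp R) : (forall U, T U -> (U Y <-> U Z)) -> Y = Z.
Proof.
move=> YZ; apply: Jmap_inj; apply: predext => x.
by have := YZ _ (Vset_Jmap_open [:: x]); rewrite !Vset1.
Qed.

Lemma Xp_quasi_compact : quasi_compact T (fun _ => True).
Proof.
rewrite [P in quasi_compact _ P](_ : _ = Vset J nil); first exact: Vset_Jmap_compact.
by apply: predext => Y; split=> // _ f [].
Qed.

Lemma Xp_qc_open_setI U V : T U -> quasi_compact T U -> T V -> quasi_compact T V ->
  quasi_compact T (fun Y => U Y /\ V Y).
Proof.
move=> TU /(Xp_qc_open_decomp TU) [F1 ->] TV /(Xp_qc_open_decomp TV) [F2 ->].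
rewrite [P in quasi_compact _ P](_ : _ = fun Y => exists p,
  List.In p (List.list_prod F1 F2) /\ Vset J (List.app p.1 p.2) Y).
  by apply: quasi_compact_bigcup => p _; exact: Vset_Jmap_compact.
apply: predext => Y; split=> [[[fs [F1fs Yfs]] [gs [F2gs Ygs]]] | [[fs gs] []]].
  by exists (fs, gs); split; [exact: List.in_prod | exact/Vset_cat].
by move=> /List.in_prod_iff [F1fs F2gs] /Vset_cat [Yfs Ygs]; split; [exists fs | exists gs].
Qed.

Lemma Xp_qc_basis U Y : T U -> U Y ->
  exists V, T V /\ quasi_compact T V /\ V Y /\ forall Z, V Z -> U Z.
Proof.
move=> TU UY; have [l [lB lU]] := TU Y UY.
have [fs lfs] := meet_Vset_Jmap (fun V lV => proj1 (lB V lV)).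
exists (Vset J fs); split; first exact: Vset_Jmap_open.
split; first exact: Vset_Jmap_compact.
by rewrite -lfs; split=> [V /lB [] | Z /lU].
Qed.

Section Sober.
Variable C : Xp R -> Prop.
Hypotheses (Cclosed : is_closed T C) (Cirr : irreducible T C).

Lemma irreducible_Vset_cat fs gs :
  (exists Y, C Y /\ Vset J fs Y) -> (exists Y, C Y /\ Vset J gs Y) ->
  exists Y, C Y /\ Vset J (List.app fs gs) Y.
Proof.
move=> [Y1 [CY1 Y1fs]] [Y2 [CY2 Y2gs]]; apply: NNPP => none.
have Vclosed hs : is_closed T (fun Y => ~ Vset J hs Y).
  rewrite /is_closed [P in T P](_ : _ = Vset J hs); first exact: Vset_Jmap_open.
  by apply: predext => Y; split=> [/NNPP | YV /(_ YV)].
have [Cfs|Cgs] : (forall Y, C Y -> ~ Vset J fs Y) \/ (forall Y, C Y -> ~ Vset J gs Y).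
  apply: (proj2 Cirr) => // Y CY; apply: NNPP => /not_or_and [/NNPP Yfs /NNPP Ygs].
  by apply: none; exists Y; split=> //; apply/Vset_cat.
- exact: Cfs CY1 Y1fs.
- exact: Cgs CY2 Y2gs.
Qed.

Let I x := exists Y, C Y /\ J Y x.

Lemma irreducible_Vset {fs} : (forall f, List.In f fs -> I f) -> exists Y, C Y /\ Vset J fs Y.
Proof.
elim: fs => [|f fs IH] fsI.
  by have [Y CY] := proj1 Cirr; exists Y; split=> // f [].
apply: (@irreducible_Vset_cat [:: f] fs); last by apply: IH => g fsg; apply: fsI; right.
by have [Y [CY Yf]] := fsI f (or_introl erefl); exists Y; split=> //; apply/Vset1.
Qed.

Lemma irreducible_union_radical : is_proper_radical_ideal I.
Proof.
have Jrad (Y : Xp R) := proj2_sig (Jrd Y).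
have [Y0 CY0] := proj1 Cirr.
split; [split; [|split] | split].
- by exists Y0; split=> //; exact: is_ideal0 (proj1 (Jrad Y0)).
- move=> x y Ix Iy.
  have [Y [CY Yxy]] : exists Y, C Y /\ Vset J [:: x; y] Y.
    by apply: irreducible_Vset => f [<-|[<-|[]]].
  by exists Y; split=> //; apply: is_idealD (proj1 (Jrad Y)) _ _; apply: Yxy; simpl; auto.
- by move=> a x [Y [CY Yx]]; exists Y; split=> //; have := is_idealMl a (proj1 (Jrad Y)) Yx.
- by move=> [Y [CY Y1]]; exact: proj1 (proj2 (Jrad Y)) Y1.
- by move=> x n [Y [CY Yxn]]; exists Y; split=> //; exact: proj2 (proj2 (Jrad Y)) x n Yxn.
Qed.

Lemma irreducible_generic_point : exists Z, forall Y, C Y <-> in_closure_pt T Z Y.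
Proof.
exists (Vxp (exist _ I irreducible_union_radical)) => Y.
rewrite Xp_in_closure Jmap_Vxp /=; split=> [CY x Yx | YI]; first by exists Y.
apply: NNPP => nCY; have [l [lB lnC]] := Cclosed Y nCY.
have [fs lfs] := meet_Vset_Jmap (fun V lV => proj1 (lB V lV)).
have Yfs : Vset J fs Y by rewrite -lfs => V /lB [].
have [Z [CZ Zfs]] := irreducible_Vset (fun f fsf => YI f (Yfs f fsf)).
by apply: (lnC Z) CZ; move: Zfs; rewrite -lfs.
Qed.

End Sober.

Lemma Xp_spectral : spectral T.
Proof.
split; first exact: Xp_T0.
split; first exact: Xp_quasi_compact.
split; first exact: Xp_qc_open_setI.
split; first exact: Xp_qc_basis.
by move=> C Cclosed Cirr; exact: irreducible_generic_point Cclosed Cirr.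
Qed.

End XpSpectral.

Section Homeomorphisms.
Context {R : comPzRingType}.

Lemma Jrd_homeomorphism (TX : topology (Xp R)) (TY : topology (Rd R)) :
  continuous TX TY Jrd -> continuous TY TX Vxp -> homeomorphism TX TY Jrd.
Proof. by move=> Jcont Vcont; exists Vxp; do !split=> //; [exact: Vxp_Jrd | exact: Jrd_Vxp]. Qed.

Lemma Jrd_continuous_zar : continuous (Xp_zar R) (inverse_top (Rd_hk R)) Jrd.
Proof.
rewrite Xp_zar_eq Rd_hk_eq; apply: continuous_to_inverse => _ [xs ->].
rewrite [P in generated _ P](_ : _ = Vset (Jmap R) xs); first exact: Vset_Jmap_open.
by apply: predext => Y; rewrite Dset_not_Vset; split=> [/NNPP | YV /(_ YV)].
Qed.

Lemma Vxp_continuous_zar : continuous (inverse_top (Rd_hk R)) (Xp_zar R) Vxp.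
Proof.
rewrite Xp_zar_eq; apply: continuous_generated => _ [fs ->].
rewrite [P in generated _ P](_ : _ = fun I => ~ Dset (@sval _ _) fs I).
  exact: inverse_top_compl (Rd_Dset_open fs) (Rd_Dset_compact fs).
by apply: predext => I; rewrite /Vset Jmap_Vxp Dset_not_Vset; split=> [IV /(_ IV) | /NNPP].
Qed.

Lemma Jrd_continuous_hk : continuous (inverse_top (Xp_zar R)) (Rd_hk R) Jrd.
Proof.
rewrite Xp_zar_eq Rd_hk_eq; apply: continuous_generated => _ [xs ->].
rewrite [P in generated _ P](_ : _ = fun Y => ~ Vset (Jmap R) xs Y).
  exact: inverse_top_compl (Vset_Jmap_open xs) (Vset_Jmap_compact xs).
by apply: predext => Y; rewrite Dset_not_Vset.
Qed.

Lemma Vxp_continuous_hk : continuous (Rd_hk R) (inverse_top (Xp_zar R)) Vxp.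
Proof.
rewrite Xp_zar_eq Rd_hk_eq; apply: continuous_to_inverse => _ [fs ->].
rewrite [P in generated _ P](_ : _ = Dset (@sval _ _) fs).
  by apply: generated_subbasis; exists fs.
by apply: predext => I; rewrite /Vset Jmap_Vxp Dset_not_Vset.
Qed.

End Homeomorphisms.

Theorem theorem4p1 (R : comPzRingType) :
  (exists h : Xp R -> Rd R,
      (forall C : Xp R, sval (h C) = Jmap R C) /\
      homeomorphism (Xp_zar R) (inverse_top (Rd_hk R)) h /\
      homeomorphism (inverse_top (Xp_zar R)) (Rd_hk R) h) /\
  spectral (Xp_zar R).
Proof.
split; last by rewrite Xp_zar_eq; exact: Xp_spectral.
exists Jrd; split=> //; split; apply: Jrd_homeomorphism.
- exact: Jrd_continuous_zar.
- exact: Vxp_continuous_zar.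
- exact: Jrd_continuous_hk.
- exact: Vxp_continuous_hk.
Qed.
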